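(* Let $m\ge1$, $0<\lambda_1\le\dots\le\lambda_m$, $0<\Lambda_0\le\Lambda_1$, and let $a,b$ be positive definite (symmetric) $m\times m$ matrices with $\Lambda_0I\le a,b\le\Lambda_1I$. Then for all $t>0$ and $w,w'\in\mathbb{R}^m$: $\|\widetilde a(t)-\widetilde b(t)\|\le\|\widetilde a(t)-\widetilde b(t)\|_s\le\|a-b\|_s$; $\|\widetilde A(t)-\widetilde B(t)\|\le\Lambda_0^{-2}\|a-b\|_s$; $|\langle w,(\widetilde A(t)-\widetilde B(t))w'\rangle|\le\Lambda_0^{-2}\|w\|\,\|w'\|\,\|a-b\|_s$.
   Context: $a(t)$ has entries $a_{ij}(1-e^{-(\lambda_i+\lambda_j)t})/(\lambda_i+\lambda_j)$; $g(t)$ is diagonal with $g_{ii}(t)=(1-e^{-2\lambda_it})/(2\lambda_i)$, $G(t)=g(t)^{-1}$; $\widetilde a(t)=G(t)^{1/2}a(t)G(t)^{1/2}$, $\widetilde A(t)=\widetilde a(t)^{-1}$; $b(t),\widetilde b(t),\widetilde B(t)$ analogously. $\|\cdot\|$ is the operator norm; $\|c\|_s=\max\{\sup_i\sum_j|c_{ij}|,\sup_j\sum_i|c_{ij}|\}$. *)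

From HB Require Import structures.
From mathcomp Require Import all_boot all_order all_algebra.
From mathcomp Require Import all_classical all_reals all_analysis.
Set Implicit Arguments. Unset Strict Implicit. Unset Printing Implicit Defensive.
Import Order.TTheory GRing.Theory Num.Theory.
Local Open Scope ring_scope.
Local Open Scope classical_set_scope.

Section Defs.
Variables (R : realType) (m : nat).

Definition enorm (v : 'cV[R]_m) : R := Num.sqrt (\sum_i (v i 0) ^+ 2).

Definition inner (w v : 'cV[R]_m) : R := \sum_i w i 0 * v i 0.

Definition opnorm (c : 'M[R]_m) : R :=
  sup [set enorm (c *m v) | v in [set v : 'cV[R]_m | enorm v <= 1]].

Definition snorm (c : 'M[R]_m) : R :=
  Num.max (\big[Num.max/0]_i \sum_j `|c i j|)
          (\big[Num.max/0]_j \sum_i `|c i j|).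

Definition bounded_spd (L0 L1 : R) (a : 'M[R]_m) : Prop :=
  a^T = a /\
  forall v : 'cV[R]_m,
    L0 * inner v v <= inner v (a *m v) /\ inner v (a *m v) <= L1 * inner v v.

Definition amat (lam : 'I_m -> R) (a : 'M[R]_m) (t : R) : 'M[R]_m :=
  \matrix_(i, j) (a i j * (1 - expR (- (lam i + lam j) * t)) / (lam i + lam j)).

Definition gdiag (lam : 'I_m -> R) (t : R) (i : 'I_m) : R :=
  (1 - expR (- (2 * lam i) * t)) / (2 * lam i).

Definition gmat (lam : 'I_m -> R) (t : R) : 'M[R]_m :=
  diag_mx (\row_i gdiag lam t i).

Definition Gmat (lam : 'I_m -> R) (t : R) : 'M[R]_m := invmx (gmat lam t).

Definition Ghalf (lam : 'I_m -> R) (t : R) : 'M[R]_m :=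
  diag_mx (\row_i Num.sqrt ((gdiag lam t i)^-1)).

Definition atilde (lam : 'I_m -> R) (a : 'M[R]_m) (t : R) : 'M[R]_m :=
  Ghalf lam t *m amat lam a t *m Ghalf lam t.

Definition Atilde (lam : 'I_m -> R) (a : 'M[R]_m) (t : R) : 'M[R]_m :=
  invmx (atilde lam a t).

End Defs.

From HB Require Import structures.
From mathcomp Require Import all_boot all_order all_algebra.
From mathcomp Require Import all_classical all_reals all_analysis.
From mathcomp Require Import ring lra.
Set Implicit Arguments. Unset Strict Implicit. Unset Printing Implicit Defensive.
Import Order.TTheory GRing.Theory Num.Theory.
Local Open Scope ring_scope.

(* Entrywise, [a(t)] is the Hadamard product of [a] with the kernel
   [expint (l_i + l_j) t = int_0^t e^(-l_i u) e^(-l_j u) du], which preserves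
   positive semidefiniteness.  Applied to [a - L0 I] this gives
   [atilde(t) >= L0 I], so [||Atilde(t)|| <= 1/L0]; applied to the all-ones
   2 x 2 matrix it gives [expint(l_i + l_j)^2 <= expint(2 l_i) expint(2 l_j)],
   i.e. the entries of [atilde(t)] are those of [a] scaled by weights in
   [0, 1].  Schur's test bounds the operator norm by [||.||_s], and
   [A^-1 - B^-1 = A^-1 (B - A) B^-1] gives the bounds on the inverses. *)

Lemma sum_mul_sumr (R : comPzSemiRingType) n (f g : 'I_n -> R) :
  \sum_j \sum_k f j * g k = (\sum_j f j) * (\sum_k g k).
Proof. by rewrite mulr_suml; apply: eq_bigr => j _; rewrite mulr_sumr. Qed.

Lemma sqr_sum_mul_le (R : realDomainType) n (x y : 'I_n -> R) :
  (\sum_j x j * y j) ^+ 2 <= (\sum_j x j ^+ 2) * (\sum_j y j ^+ 2).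
Proof.
have lagrange : \sum_j \sum_k (x j * y k - x k * y j) ^+ 2 =
    2 * ((\sum_j x j ^+ 2) * (\sum_j y j ^+ 2) - (\sum_j x j * y j) ^+ 2).
  have -> : \sum_j \sum_k (x j * y k - x k * y j) ^+ 2 =
      \sum_j \sum_k x j ^+ 2 * y k ^+ 2 + \sum_j \sum_k y j ^+ 2 * x k ^+ 2
      - 2 * \sum_j \sum_k (x j * y j) * (x k * y k).
    rewrite mulr_sumr -big_split -sumrB; apply: eq_bigr => j _.
    by rewrite mulr_sumr -big_split -sumrB; apply: eq_bigr => k _ /=; ring.
  by rewrite !sum_mul_sumr; ring.
have : 0 <= \sum_j \sum_k (x j * y k - x k * y j) ^+ 2.
  by apply: sumr_ge0 => j _; apply: sumr_ge0 => k _; apply: sqr_ge0.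
by rewrite lagrange pmulr_rge0 ?ltr0n // subr_ge0.
Qed.

Lemma sqr_wsum_le (R : rcfType) n (p y : 'I_n -> R) : (forall j, 0 <= p j) ->
  (\sum_j p j * y j) ^+ 2 <= (\sum_j p j) * (\sum_j p j * y j ^+ 2).
Proof.
move=> p0; have sqr_sqrt_p j : Num.sqrt (p j) ^+ 2 = p j by rewrite sqr_sqrtr.
have := sqr_sum_mul_le (fun j => Num.sqrt (p j)) (fun j => Num.sqrt (p j) * y j).
congr (_ <= _ * _).
- by congr (_ ^+ 2); apply: eq_bigr => j _; rewrite mulrA -expr2 sqr_sqrt_p.
- by apply: eq_bigr => j _; rewrite sqr_sqrt_p.
- by apply: eq_bigr => j _; rewrite exprMn sqr_sqrt_p.
Qed.

Section QuadraticForms.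
Variables (R : realType) (n : nat).
Implicit Types (v w : 'cV[R]_n) (M : 'M[R]_n).

Definition psd M : Prop := forall v, 0 <= inner v (M *m v).

Definition coercive (L : R) M : Prop := forall v, L * inner v v <= inner v (M *m v).

Lemma innerE w v : inner w v = (w^T *m v) 0 0.
Proof. by rewrite /inner mxE; apply: eq_bigr => i _; rewrite mxE. Qed.

Lemma inner_mulmxE w M v :
  inner w (M *m v) = \sum_k \sum_l w k 0 * v l 0 * M k l.
Proof.
rewrite /inner; apply: eq_bigr => k _; rewrite mxE mulr_sumr.
by apply: eq_bigr => l _; rewrite mulrCA mulrC.
Qed.

Lemma inner_trmx_mulmx w C v : inner w (C *m v) = inner (C^T *m w) v.
Proof. by rewrite !innerE trmx_mul trmxK mulmxA. Qed.

Lemma inner_scalar_mx w (L : R) v : inner w (L%:M *m v) = L * inner w v.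
Proof. by rewrite mul_scalar_mx /inner mulr_sumr; apply: eq_bigr => i _; rewrite mxE mulrCA. Qed.

Lemma innerB w u v : inner w (u - v) = inner w u - inner w v.
Proof. by rewrite /inner -sumrB; apply: eq_bigr => i _; rewrite !mxE mulrBr. Qed.

Lemma coercive_psdE (L : R) M : coercive L M <-> psd (M - L%:M).
Proof.
split=> h v; have := h v; rewrite mulmxBl innerB inner_scalar_mx subr_ge0 //.
Qed.

Lemma psd_congr M C : psd M -> psd (C^T *m M *m C).
Proof. by move=> hM v; rewrite -!mulmxA inner_trmx_mulmx trmxK. Qed.

End QuadraticForms.

Section ExpIntegral.
Variable R : realType.

Definition expint (c s : R) : R := c^-1 * (1 - expR (- c * s)).

Lemma expint0 (c : R) : expint c 0 = 0.
Proof. by rewrite /expint mulr0 expR0 subrr mulr0. Qed.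

Lemma expint_gt0 (c s : R) : 0 < c -> 0 < s -> 0 < expint c s.
Proof.
move=> c0 s0; rewrite /expint mulr_gt0 ?invr_gt0 // subr_gt0 expR_lt1.
by rewrite mulNr oppr_lt0 mulr_gt0.
Qed.

Lemma is_derive_expint (c s : R) : c != 0 -> is_derive s 1 (expint c) (expR (- c * s)).
Proof.
move=> c0.
have dlin : is_derive s 1 (fun u : R => - c * u) (- c).
  by have := is_deriveZ (- c) (is_derive_id s (1 : R)); rewrite /GRing.scale /= mulr1.
have dexp := is_derive1_comp (is_derive_expR _) dlin.
have := is_deriveZ c^-1 (is_deriveB (is_derive_cst (1 : R) s 1) dexp).
rewrite /GRing.scale /=; congr (is_derive _ _ _ _); by field.
Qed.

Lemma is_derive_sumr n (f : 'I_n -> R -> R) (df : 'I_n -> R) (s : R) :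
  (forall i, is_derive s 1 (f i) (df i)) ->
  is_derive s 1 (fun u => \sum_i f i u) (\sum_i df i).
Proof. by move=> h; have := is_derive_sum h; rewrite fct_sumE. Qed.

Lemma is_deriveMl (f : R -> R) (k df s : R) :
  is_derive s 1 f df -> is_derive s 1 (fun u => k * f u) (k * df).
Proof. exact: is_deriveZ. Qed.

Lemma amatE n (lam : 'I_n -> R) (B : 'M[R]_n) t i j :
  amat lam B t i j = B i j * expint (lam i + lam j) t.
Proof. by rewrite mxE /expint mulNr; ring. Qed.

(* [u |-> <v, amat B u v>] vanishes at [0] and its derivative is the quadratic
   form of [B] at [(v_k e^(-lam_k u))_k]. *)
Lemma psd_amat n (lam : 'I_n -> R) (B : 'M[R]_n) t :
  (forall i, 0 < lam i) -> 0 <= t -> psd B -> psd (amat lam B t).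
Proof.
move=> lam0 t0 hB v.
pose Q u := inner v (amat lam B u *m v).
pose y u : 'cV[R]_n := \col_k (v k 0 * expR (- lam k * u)).
have dQ (u : R) : is_derive u 1 Q (inner (y u) (B *m y u)).
  rewrite /Q; under eq_fun do rewrite inner_mulmxE.
  rewrite inner_mulmxE.
  apply: is_derive_sumr => k; apply: is_derive_sumr => l.
  under eq_fun do rewrite amatE mulrA.
  have -> : y u k 0 * y u l 0 * B k l
      = v k 0 * v l 0 * B k l * expR (- (lam k + lam l) * u).
    by rewrite !mxE opprD mulrDl expRD; ring.
  by apply: is_deriveMl; apply: is_derive_expint; rewrite lt0r_neq0 ?addr_gt0.
have : Q 0 <= Q t.
  apply: (@ger0_derive1_ndecr R Q 0 t) => //.
  - by move=> u _; rewrite derive1E derive_val; exact: hB.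
  - apply: derivable_within_continuous => u _; exact: (@ex_derive _ _ _ _ _ _ _ (dQ u)).
suff -> : Q 0 = 0 by [].
by rewrite /Q inner_mulmxE big1 // => k _; rewrite big1 // => l _; rewrite amatE expint0 !mulr0.
Qed.

End ExpIntegral.

(* The determinant of the positive semidefinite [amat [p; q] (const_mx 1) t]. *)
Lemma expint_sqr_le (R : realType) (p q t : R) : 0 < p -> 0 < q -> 0 < t ->
  expint (p + q) t ^+ 2 <= expint (p + p) t * expint (q + q) t.
Proof.
move=> p0 q0 t0.
pose lam (k : 'I_2) := if val k == 0%N then p else q.
have lam0 k : 0 < lam k by rewrite /lam; case: ifP.
have ones_psd : psd (const_mx 1 : 'M[R]_2).
  move=> v; rewrite inner_mulmxE.
  under eq_bigr do under eq_bigr do rewrite mxE mulr1.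
  by rewrite sum_mul_sumr -expr2 sqr_ge0.
set hpq := expint (p + q) t; set hpp := expint (p + p) t; set hqq := expint (q + q) t.
have hpp0 : 0 < hpp by apply: expint_gt0; rewrite ?addr_gt0.
have := psd_amat lam0 (ltW t0) ones_psd (\col_k (if val k == 0%N then hpq else - hpp)).
rewrite inner_mulmxE !big_ord_recl !big_ord0 /= !amatE !mxE /= /lam /=.
rewrite (addrC q p) -/hpq -/hpp -/hqq => h.
have : 0 <= hpp * (hpp * hqq - hpq ^+ 2) by nra.
nra.
Qed.

Section Atilde.
Variables (R : realType) (m : nat) (lam : 'I_m -> R) (t : R).
Hypotheses (lam_gt0 : forall i, 0 < lam i) (t_gt0 : 0 < t).

Local Notation sig i := (Num.sqrt (gdiag lam t i)^-1).

Definition atilde_weight (i j : 'I_m) : R := sig i * sig j * expint (lam i + lam j) t.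

Lemma gdiag_expint i : gdiag lam t i = expint (lam i + lam i) t.
Proof. by rewrite /gdiag /expint (_ : 2 * lam i = lam i + lam i) 1?mulrC //; ring. Qed.

Lemma atildeE (a : 'M[R]_m) i j : atilde lam a t i j = atilde_weight i j * a i j.
Proof. by rewrite /atilde /Ghalf mul_mx_diag mul_diag_mx !mxE /atilde_weight /expint; ring. Qed.

Lemma expint_gt0_lam i j : 0 < expint (lam i + lam j) t.
Proof. by rewrite expint_gt0 ?addr_gt0. Qed.

Lemma sqr_sig i : sig i ^+ 2 = (expint (lam i + lam i) t)^-1.
Proof. by rewrite sqr_sqrtr gdiag_expint // invr_ge0 ltW ?expint_gt0_lam. Qed.

Lemma atilde_weight_diag i : atilde_weight i i = 1.
Proof. by rewrite /atilde_weight -expr2 sqr_sig mulVf // lt0r_neq0 ?expint_gt0_lam. Qed.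

Lemma atilde_weight_ge0 i j : 0 <= atilde_weight i j.
Proof.
apply: mulr_ge0; first by rewrite mulr_ge0 ?sqrtr_ge0.
exact/ltW/expint_gt0_lam.
Qed.

Lemma atilde_weight_le1 i j : atilde_weight i j <= 1.
Proof.
have w0 := atilde_weight_ge0 i j.
suff : atilde_weight i j ^+ 2 <= 1 by nra.
have Epos := mulr_gt0 (expint_gt0_lam i i) (expint_gt0_lam j j).
rewrite /atilde_weight 2!exprMn !sqr_sig -invfM mulrC ler_pdivrMr // mul1r.
exact: expint_sqr_le.
Qed.

Lemma atildeB (a b : 'M[R]_m) : atilde lam (a - b) t = atilde lam a t - atilde lam b t.
Proof.
have amatB : amat lam (a - b) t = amat lam a t - amat lam b t.
  by apply/matrixP => i j; rewrite !mxE; ring.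
by rewrite /atilde amatB mulmxBr mulmxBl.
Qed.

Lemma atilde_scalar (L : R) : atilde lam L%:M t = L%:M.
Proof.
apply/matrixP => i j; rewrite atildeE !mxE.
by case: eqVneq => [->|_]; rewrite ?atilde_weight_diag ?mul1r ?mulr0.
Qed.

Lemma coercive_atilde (L : R) (a : 'M[R]_m) :
  coercive L a -> coercive L (atilde lam a t).
Proof.
have GT : (Ghalf lam t)^T = Ghalf lam t by rewrite tr_diag_mx.
rewrite !coercive_psdE -[in X in _ -> X]atilde_scalar -atildeB /atilde.
move=> /(psd_amat lam_gt0 (ltW t_gt0))/(psd_congr (Ghalf lam t)).
by rewrite GT.
Qed.

Lemma normr_atildeB_le (a b : 'M[R]_m) i j :
  `|(atilde lam a t - atilde lam b t) i j| <= `|(a - b) i j|.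
Proof.
rewrite -atildeB atildeE normrM ger0_norm ?atilde_weight_ge0 //.
by rewrite ler_piMl ?atilde_weight_le1.
Qed.

End Atilde.

Section Norms.
Variables (R : realType) (n : nat).
Implicit Types (u v w : 'cV[R]_n) (c M : 'M[R]_n).

Lemma enorm_ge0 v : 0 <= enorm v.
Proof. exact: sqrtr_ge0. Qed.

Lemma enorm_sqr v : enorm v ^+ 2 = \sum_i v i 0 ^+ 2.
Proof. by rewrite sqr_sqrtr // sumr_ge0 // => i _; apply: sqr_ge0. Qed.

Lemma inner_self v : inner v v = enorm v ^+ 2.
Proof. by rewrite enorm_sqr; apply: eq_bigr => i _; rewrite expr2. Qed.

Lemma normr_inner_le w v : `|inner w v| <= enorm w * enorm v.
Proof.
rewrite -ler_sqr ?nnegrE ?mulr_ge0 ?enorm_ge0 // real_normK ?num_real //.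
by rewrite exprMn !enorm_sqr; apply: sqr_sum_mul_le.
Qed.

Lemma enorm_eq0 (v : 'cV[R]_n) : (enorm v == 0) = (v == 0).
Proof.
apply/idP/eqP => [|->]; last by rewrite /enorm big1 ?sqrtr0 // => i _; rewrite mxE expr0n.
rewrite -sqrf_eq0 enorm_sqr psumr_eq0 => [/allP v0|i _]; last exact: sqr_ge0.
apply/matrixP => i j; rewrite ord1 mxE; apply/eqP.
by have := v0 i (mem_index_enum i); rewrite sqrf_eq0.
Qed.

Lemma row_sum_le_snorm c i : \sum_j `|c i j| <= snorm c.
Proof. by rewrite /snorm le_max le_bigmax. Qed.

Lemma col_sum_le_snorm c j : \sum_i `|c i j| <= snorm c.
Proof. by rewrite /snorm le_max [X in _ || X]le_bigmax orbT. Qed.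

Lemma snorm_ge0 c : 0 <= snorm c.
Proof. by rewrite /snorm le_max bigmax_ge_id. Qed.

Lemma snorm_le c c' : (forall i j, `|c i j| <= `|c' i j|) -> snorm c <= snorm c'.
Proof.
move=> le_cc'; rewrite /snorm ge_max; apply/andP; split.
- apply: bigmax_le; first exact: snorm_ge0.
  by move=> i _; apply: le_trans (row_sum_le_snorm c' i); apply: ler_sum.
- apply: bigmax_le; first exact: snorm_ge0.
  by move=> j _; apply: le_trans (col_sum_le_snorm c' j); apply: ler_sum.
Qed.

Lemma snormN c : snorm (- c) = snorm c.
Proof. by apply/le_anti; rewrite !snorm_le // => i j; rewrite mxE normrN. Qed.

(* Schur's test: [|(c v)_i|^2 <= (sum_j |c_ij|) (sum_j |c_ij| v_j^2)], then sum over [i]. *)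
Lemma enorm_mulmx_le c v : enorm (c *m v) <= snorm c * enorm v.
Proof.
have S0 := snorm_ge0 c.
have row_bound i : (c *m v) i 0 ^+ 2 <= snorm c * \sum_j `|c i j| * v j 0 ^+ 2.
  have le_norm_sum : `|(c *m v) i 0| <= \sum_j `|c i j| * `|v j 0|.
    rewrite mxE; apply: le_trans (ler_norm_sum _ _ _) _.
    by apply: ler_sum => j _; rewrite normrM.
  rewrite -real_normK ?num_real //.
  apply: (le_trans (y := (\sum_j `|c i j| * `|v j 0|) ^+ 2)).
    by apply: lerXn2r; rewrite ?nnegrE ?sumr_ge0 // => j _; rewrite mulr_ge0.
  apply: le_trans (sqr_wsum_le _ (fun j => normr_ge0 (c i j))) _.
  under [X in _ * X <= _]eq_bigr do rewrite real_normK ?num_real //.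
  by rewrite ler_wpM2r ?row_sum_le_snorm ?sumr_ge0 // => j _; rewrite mulr_ge0 ?sqr_ge0.
rewrite -ler_sqr ?nnegrE ?mulr_ge0 ?enorm_ge0 // enorm_sqr.
apply: le_trans (ler_sum _ (fun i _ => row_bound i)) _.
rewrite -mulr_sumr exprMn expr2 -mulrA ler_wpM2l // exchange_big /= enorm_sqr.
rewrite mulr_sumr; apply: ler_sum => j _.
by rewrite -mulr_suml ler_wpM2r ?sqr_ge0 ?col_sum_le_snorm.
Qed.

Lemma opnorm_le c (B : R) : 0 <= B ->
  (forall v, enorm (c *m v) <= B * enorm v) -> opnorm c <= B.
Proof.
move=> B0 le_cB; apply: ge_sup.
  exists (enorm (c *m 0)), 0 => //=.
  by rewrite /enorm big1 ?sqrtr0 // => i _; rewrite mxE expr0n.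
move=> _ [v /= v1 <-]; apply: le_trans (le_cB v) _.
by rewrite -[leRHS]mulr1 ler_wpM2l.
Qed.

Lemma opnorm_le_snorm c : opnorm c <= snorm c.
Proof. by rewrite opnorm_le ?snorm_ge0 // => v; apply: enorm_mulmx_le. Qed.

End Norms.

Section CoerciveInverse.
Variables (R : realType) (n : nat) (L : R) (M : 'M[R]_n).
Hypotheses (L_gt0 : 0 < L) (M_coercive : coercive L M).

Lemma enorm_mulmx_ge (v : 'cV[R]_n) : L * enorm v <= enorm (M *m v).
Proof.
have := M_coercive v; rewrite inner_self => le_Lv.
have := le_trans le_Lv (le_trans (ler_norm _) (normr_inner_le v (M *m v))).
have [<-|v_gt0] := eqVneq 0 (enorm v); first by rewrite mulr0 enorm_ge0.
have {}v_gt0 : 0 < enorm v by rewrite lt_def eq_sym v_gt0 enorm_ge0.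
nra.
Qed.

Lemma coercive_unitmx : M \in unitmx.
Proof.
rewrite -unitmx_tr -row_free_unit -kermx_eq0; apply/eqP/row_matrixP => i.
set r := row i (kermx M^T); rewrite row0.
have rM : r *m M^T = 0 by apply/sub_kermxP; exact: row_sub.
have Mr : M *m r^T = 0 by rewrite -[M]trmxK -trmx_mul rM trmx0.
have : r^T == 0.
  rewrite -enorm_eq0 eq_le enorm_ge0 andbT.
  have := enorm_mulmx_ge r^T; rewrite Mr.
  have -> : enorm (0 : 'cV[R]_n) = 0 by apply/eqP; rewrite enorm_eq0.
  by rewrite pmulr_rle0.
by rewrite -trmx0 (inj_eq trmx_inj) => /eqP.
Qed.

Lemma enorm_invmx_le (u : 'cV[R]_n) : enorm (invmx M *m u) <= L^-1 * enorm u.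
Proof.
rewrite ler_pdivlMl //; apply: le_trans (enorm_mulmx_ge _) _.
by rewrite mulmxA mulmxV ?mul1mx ?coercive_unitmx.
Qed.

End CoerciveInverse.

Lemma invmxB (R : comUnitRingType) n (A B : 'M[R]_n) :
  A \in unitmx -> B \in unitmx -> invmx A - invmx B = invmx A *m (B - A) *m invmx B.
Proof.
move=> uA uB.
by rewrite mulmxBr mulmxBl -mulmxA mulmxV // mulmx1 mulVmx // mul1mx.
Qed.

Lemma enorm_invmxB_le (R : realType) n (L : R) (A B : 'M[R]_n) (v : 'cV[R]_n) :
  0 < L -> coercive L A -> coercive L B ->
  enorm ((invmx A - invmx B) *m v) <= L ^- 2 * snorm (A - B) * enorm v.
Proof.
move=> L_gt0 cA cB.
rewrite invmxB ?(coercive_unitmx L_gt0 cA) ?(coercive_unitmx L_gt0 cB) // -!mulmxA.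
have L'_ge0 : 0 <= L^-1 by rewrite invr_ge0 ltW.
apply: le_trans (enorm_invmx_le L_gt0 cA _) _.
rewrite -exprVn expr2 -!mulrA ler_wpM2l //.
apply: le_trans (enorm_mulmx_le _ _) _.
by rewrite -opprB snormN mulrCA ler_wpM2l ?snorm_ge0 ?enorm_invmx_le.
Qed.

Theorem lemma4p5 (R : realType) (m : nat) (lam : 'I_m -> R) (L0 L1 : R)
    (a b : 'M[R]_m) :
  (1 <= m)%N ->
  (forall i, 0 < lam i) ->
  (forall i j : 'I_m, (i <= j)%N -> lam i <= lam j) ->
  0 < L0 -> L0 <= L1 ->
  bounded_spd L0 L1 a -> bounded_spd L0 L1 b ->
  forall t : R, 0 < t ->
  [/\ opnorm (atilde lam a t - atilde lam b t)
        <= snorm (atilde lam a t - atilde lam b t),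
      snorm (atilde lam a t - atilde lam b t) <= snorm (a - b),
      opnorm (Atilde lam a t - Atilde lam b t) <= L0 ^- 2 * snorm (a - b)
    & forall w w' : 'cV[R]_m,
        `| inner w ((Atilde lam a t - Atilde lam b t) *m w') |
          <= L0 ^- 2 * enorm w * enorm w' * snorm (a - b)].
Proof.
move=> _ lam_gt0 _ L0_gt0 _ [_ a_bnd] [_ b_bnd] t t_gt0.
have coercive_a : coercive L0 (atilde lam a t).
  by apply: coercive_atilde => // v; case: (a_bnd v).
have coercive_b : coercive L0 (atilde lam b t).
  by apply: coercive_atilde => // v; case: (b_bnd v).
have L0inv_ge0 : 0 <= L0 ^- 2 by rewrite invr_ge0 exprn_ge0 ?ltW.
have snorm_atildeB : snorm (atilde lam a t - atilde lam b t) <= snorm (a - b).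
  by apply: snorm_le => i j; apply: normr_atildeB_le.
have AtildeB_le v : enorm ((Atilde lam a t - Atilde lam b t) *m v)
    <= L0 ^- 2 * snorm (a - b) * enorm v.
  apply: le_trans (enorm_invmxB_le v L0_gt0 coercive_a coercive_b) _.
  by rewrite ler_wpM2r ?enorm_ge0 // ler_wpM2l.
split=> //.
- exact: opnorm_le_snorm.
- by apply: opnorm_le AtildeB_le; rewrite mulr_ge0 ?snorm_ge0.
- move=> w w'; apply: le_trans (normr_inner_le _ _) _.
  rewrite (_ : _ * _ * _ * _ = enorm w * (L0 ^- 2 * snorm (a - b) * enorm w')); last by ring.
  by rewrite ler_wpM2l ?enorm_ge0.
Qed.
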